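(* Suppose $\ell\in\mathcal{D}^-[0,\infty)$, $r\in\mathcal{D}^+[0,\infty)$ and $\psi\in\mathcal{D}[0,\infty)$ are piecewise constant, each with a finite number of jumps, and $\ell\le r$. Then the pair $(\psi-\Xi_{\ell,r}(\psi),\,-\Xi_{\ell,r}(\psi))$ is the unique solution to the ESP on $[\ell(\cdot),r(\cdot)]$ for $\psi$, where for $t\ge0$ $$\Xi_{\ell,r}(\psi)(t)=\max\Big(\big[(\psi(0)-r(0))^+\wedge\inf_{u\in[0,t]}(\psi(u)-\ell(u))\big],\ \sup_{s\in[0,t]}\big[(\psi(s)-r(s))\wedge\inf_{u\in[s,t]}(\psi(u)-\ell(u))\big]\Big).$$
   Context: $\mathcal{D}[0,\infty)$ denotes the càdlàg functions $[0,\infty)\to(-\infty,\infty)$; $\mathcal{D}^-[0,\infty)$ (resp. $\mathcal{D}^+[0,\infty)$) denotes càdlàg functions with values in $[-\infty,\infty)$ (resp. $(-\infty,\infty]$); $a\wedge b=\min\{a,b\}$, $a^+=\max\{a,0\}$. ESP: $(\phi,\eta)\in\mathcal{D}[0,\infty)^2$ solves the ESP on $[\ell(\cdot),r(\cdot)]$ for $\psi$ if (1) $\phi(t)=\psi(t)+\eta(t)\in[\ell(t),r(t)]$ for all $t\ge0$; (2) for all $0\le s\le t$: $\eta(t)-\eta(s)\ge0$ if $\phi(u)<r(u)$ for all $u\in(s,t]$, and $\eta(t)-\eta(s)\le0$ if $\phi(u)>\ell(u)$ for all $u\in(s,t]$; (3) for all $t\ge0$: $\eta(t)-\eta(t-)\ge0$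 if $\phi(t)<r(t)$, and $\eta(t)-\eta(t-)\le0$ if $\phi(t)>\ell(t)$, where $\eta(0-)=0$. *)

From HB Require Import structures.
From mathcomp Require Import all_boot all_order all_algebra.
From mathcomp Require Import all_classical all_reals all_analysis.
Set Implicit Arguments. Unset Strict Implicit. Unset Printing Implicit Defensive.
Import Order.TTheory GRing.Theory Num.Theory.
Import numFieldNormedType.Exports.
Local Open Scope classical_set_scope.
Local Open Scope ring_scope.

Section Defs.
Variable R : realType.

Definition cadlag (f : R -> R) : Prop :=
  (forall t, 0 <= t -> f x @[x --> t^'+] --> f t) /\
  (forall t, 0 < t -> cvg (f x @[x --> t^'-])).

(* left limit f(t-), with the convention f(0-) = 0 *)
Definition leftlim (f : R -> R) (t : R) : R :=
  if t == 0 then 0 else lim (f x @[x --> t^'-]).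

Definition pw_const (T : Type) (f : R -> T) : Prop :=
  exists (n : nat) (a : nat -> R),
    a 0%N = 0 /\
    (forall i, (i < n)%N -> a i < a i.+1) /\
    (forall i, (i < n)%N -> forall t, a i <= t < a i.+1 -> f t = f (a i)) /\
    (forall t, a n <= t -> f t = f (a n)).

Definition ESP (l r : R -> \bar R) (psi phi eta : R -> R) : Prop :=
  cadlag phi /\ cadlag eta /\
  (forall t, 0 <= t -> phi t = psi t + eta t /\
       (l t <= (phi t)%:E)%E /\ ((phi t)%:E <= r t)%E) /\
  (forall s t, 0 <= s -> s <= t ->
     ((forall u, s < u -> u <= t -> ((phi u)%:E < r u)%E) -> eta t - eta s >= 0) /\
     ((forall u, s < u -> u <= t -> (l u < (phi u)%:E)%E) -> eta t - eta s <= 0)) /\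
  (forall t, 0 <= t ->
     ((((phi t)%:E < r t)%E -> eta t - leftlim eta t >= 0) /\
      ((l t < (phi t)%:E)%E -> eta t - leftlim eta t <= 0))).

Local Open Scope ereal_scope.

Definition Xi (l r : R -> \bar R) (psi : R -> R) (t : R) : \bar R :=
  maxe
    (mine (maxe ((psi 0%R)%:E - r 0%R) 0)
          (ereal_inf [set (psi u)%:E - l u | u in `[0%R, t]]))
    (ereal_sup [set mine ((psi s)%:E - r s)
                         (ereal_inf [set (psi u)%:E - l u | u in `[s, t]])
               | s in `[0%R, t]]).

End Defs.

From HB Require Import structures.
From mathcomp Require Import all_boot all_order all_algebra.
From mathcomp Require Import all_classical all_reals all_analysis.
From mathcomp Require Import zify lra.
Import Order.TTheory GRing.Theory Num.Theory.
Import numFieldNormedType.Exports.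
Local Open Scope classical_set_scope.
Local Open Scope ring_scope.

(* When l, r and psi only jump at the finitely many times of a list J, the
   infimum and supremum defining Xi_{l,r}(psi) collapse: Xi is constant on every
   jump-free interval, and across a jump time m reached from a jump-free stretch
   starting at p it is the previous value clamped to the window
   [psi m - r m, psi m - l m]:  Xi m = max (psi m - r m) (min (Xi p) (psi m - l m)).
   Clamping moves Xi down only when psi - Xi would exceed r and up only when it
   would drop below l, which are exactly the ESP conditions on eta = - Xi.
   Conversely, for any solution, eta is constant on jump-free intervals (a
   supremum argument on the times at which phi touches a barrier, using the
   left limits of eta) and the jump conditions at a jump time leave the clamped
   value as the only possibility; induction over the jump times gives
   uniqueness. *)

Set Implicit Arguments. Unset Strict Implicit. Unset Printing Implicit Defensive.

Section JumpTimes.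
Variable R : realType.

Definition jumps_in (T : Type) (J : seq R) (f : R -> T) :=
  forall u v, 0 <= u -> u <= v -> (forall j, j \in J -> ~ (u < j <= v)) -> f v = f u.

Definition jumpfree (J : seq R) (a b : R) := forall j, j \in J -> ~ (a < j < b).

Lemma pw_const_jumps_in T (f : R -> T) : pw_const f -> exists J, jumps_in J f.
Proof.
move=> [n [a [a0 [_ [const_on_step const_after]]]]].
exists (map a (iota 0 n.+1)) => u v u0 uv noj.
suff H : forall d i, (i + d = n)%N -> a i <= u -> f v = f u.
  by apply: (H n 0%N) => //; rewrite a0.
elim=> [|d IH] i.
  rewrite addn0 => -> ai; rewrite (const_after u ai) (const_after v) //.
  exact: le_trans uv.
move=> idn ai; have iltn : (i < n)%N by rewrite -idn; lia.
case: (ltP u (a i.+1)) => ua; last by apply: (IH i.+1) => //; lia.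
have va : v < a i.+1.
  rewrite ltNge; apply/negP => av; apply: (noj (a i.+1)); last by rewrite ua av.
  by apply/mapP; exists i.+1 => //; rewrite mem_iota; lia.
rewrite (const_on_step i iltn u) ?ai ?ua // (const_on_step i iltn v) // va andbT.
exact: le_trans uv.
Qed.

Lemma jumps_in_subset T (J J' : seq R) (f : R -> T) :
  {subset J <= J'} -> jumps_in J f -> jumps_in J' f.
Proof. by move=> JJ' Jf u v u0 uv noj; apply: Jf => // j /JJ'; apply: noj. Qed.

Lemma jumps_in_comp T U (J : seq R) (f : R -> T) (F : T -> U) :
  jumps_in J f -> jumps_in J (F \o f).
Proof. by move=> Jf u v u0 uv noj /=; rewrite (Jf u v). Qed.

Lemma jumps_in_comp2 T U V (J : seq R) (f : R -> T) (g : R -> U) (F : T -> U -> V) :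
  jumps_in J f -> jumps_in J g -> jumps_in J (fun t => F (f t) (g t)).
Proof. by move=> Jf Jg u v u0 uv noj; rewrite (Jf u v) ?(Jg u v). Qed.

Lemma jumpfree_const T (J : seq R) (f : R -> T) a b :
  jumps_in J f -> 0 <= a -> jumpfree J a b -> forall u, a <= u < b -> f u = f a.
Proof.
move=> Jf a0 noj u /andP[au ub]; apply: Jf => // j jJ /andP[aj ju].
by apply: (noj j jJ); rewrite aj (le_lt_trans ju ub).
Qed.

Lemma jump_gap (t : R) (J : seq R) : exists2 d, 0 < d &
  forall j, j \in J -> (t < j -> t + d <= j) /\ (j < t -> j <= t - d).
Proof.
elim: J => [|j J [d d0 IH]]; first by exists 1.
have shrink e : 0 < e -> forall k, k \in J ->
    (t < k -> t + Num.min d e <= k) /\ (k < t -> k <= t - Num.min d e).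
  move=> e0 k kJ; have [tk kt] := IH k kJ; split=> [/tk|/kt] dk.
    by apply: le_trans dk; rewrite lerD2l ge_min lexx.
  by apply: le_trans dk _; rewrite lerD2l lerN2 ge_min lexx.
case: (ltgtP t j) => tj.
- exists (Num.min d (j - t)); first by rewrite lt_min d0 subr_gt0.
  move=> k; rewrite inE => /predU1P[->|]; last by apply: shrink; rewrite subr_gt0.
  split=> [_|]; last by rewrite ltNge (ltW tj).
  by rewrite -lerBrDl ge_min lexx orbT.
- exists (Num.min d (t - j)); first by rewrite lt_min d0 subr_gt0.
  move=> k; rewrite inE => /predU1P[->|]; last by apply: shrink; rewrite subr_gt0.
  split=> [|_]; first by rewrite ltNge (ltW tj).
  by rewrite lerBrDl -lerBrDr ge_min lexx orbT.
- exists d => // k; rewrite inE => /predU1P[->|kJ]; last exact: IH.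
  by rewrite -tj ltxx.
Qed.

Lemma jumpfree_right t J : exists2 q, t < q & jumpfree J t q.
Proof.
have [d d0 gapJ] := jump_gap t J; exists (t + d); first by rewrite ltrDl.
move=> j /gapJ[+ _] /andP[tj jq] => /(_ tj); by rewrite leNgt jq.
Qed.

Lemma jumpfree_left t J : 0 < t -> exists p, [/\ 0 <= p, p < t & jumpfree J p t].
Proof.
move=> t0; have [d d0 gapJ] := jump_gap t J; exists (t - Num.min d t); split.
- by rewrite subr_ge0 ge_min lexx orbT.
- by rewrite ltrBlDr ltrDl lt_min d0 t0.
move=> j /gapJ[_ +] /andP[pj jt] => /(_ jt) jtd.
move: pj; rewrite ltNge => /negP; apply; apply: le_trans jtd _.
by rewrite lerD2l lerN2 ge_min lexx.
Qed.

Definition last_jump (J : seq R) (t : R) :=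
  foldr (fun j acc => if (0 < j) && (j <= t) then Num.max j acc else acc) 0 J.

Lemma last_jumpP J t : 0 <= t ->
  [/\ 0 <= last_jump J t, last_jump J t <= t,
      last_jump J t = 0 \/ (last_jump J t \in J /\ 0 < last_jump J t)
    & forall j, j \in J -> 0 < j -> j <= t -> j <= last_jump J t].
Proof.
move=> t0; elim: J => [|j J [ge0 le_t eq0_or_in ub]] /=; first by split => //; left.
case: ifP => [/andP[j0 jt]|jNt]; last first.
  split => //; first by case: eq0_or_in => [->|[mJ m0]]; [left|right; rewrite inE mJ orbT].
  move=> k; rewrite inE => /predU1P[->|]; last exact: ub.
  by move=> k0 kt; move: jNt; rewrite k0 kt.
split.
- by rewrite le_max ge0 orbT.
- by rewrite ge_max jt le_t.
- case: (leP j (last_jump J t)) => jm; last by right; rewrite inE eqxx.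
  case: eq0_or_in => [m0|[mJ mpos]]; last by right; rewrite inE mJ orbT.
  by move: (lt_le_trans j0 jm); rewrite m0 ltxx.
- move=> k; rewrite inE => /predU1P[->|kJ] k0 kt; first by rewrite le_max lexx.
  by rewrite le_max ub ?orbT.
Qed.

Definition njumps (J : seq R) t := count (fun j => j <= t) J.

Lemma njumps_lt J p m : p < m -> m \in J -> (njumps J p < njumps J m)%N.
Proof.
move=> pm; elim: J => // j J IH; rewrite inE /njumps /= => /predU1P[<-|/IH].
  rewrite lexx (leNgt m p) pm /= add0n ltnS.
  by apply: sub_count => x /= xp; apply: le_trans xp (ltW pm).
case: (leP j p) => jp; first by rewrite (le_trans jp (ltW pm)) /= !add1n ltnS.
by case: (j <= m) => /=; rewrite ?add0n ?add1n // => /ltnW; rewrite ltnS.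
Qed.

Lemma le_njumps J p m : p <= m -> (njumps J p <= njumps J m)%N.
Proof. by move=> pm; apply: sub_count => x /= xp; apply: le_trans xp pm. Qed.

Lemma jumps_ind (J : seq R) (Q : R -> Prop) :
  (forall u v, 0 <= u -> u <= v -> (forall j, j \in J -> ~ (u < j <= v)) ->
     Q u -> Q v) ->
  Q 0 ->
  (forall p m, 0 <= p -> p < m -> jumpfree J p m -> Q p -> Q m) ->
  forall t, 0 <= t -> Q t.
Proof.
move=> Qconst Q0 Qstep.
suff H n t : 0 <= t -> (njumps J t < n)%N -> Q t by move=> t t0; apply: (H (njumps J t).+1).
elim: n t => // n IH t t0 Nt.
have [m0 mt m_eq0_or_in m_ub] := last_jumpP J t0.
apply: (Qconst (last_jump J t)) => //.
  move=> j jJ /andP[mj jt].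
  by have := m_ub j jJ (le_lt_trans m0 mj) jt; rewrite leNgt mj.
case: m_eq0_or_in => [->//|[mJ mpos]].
have [p [p0 pm noj]] := jumpfree_left J mpos.
apply: (Qstep p) => //; apply: IH => //.
have := njumps_lt pm mJ; have := le_njumps J mt; lia.
Qed.

Lemma jumps_in_nondecreasing J (e : R -> R) (P : R -> Prop) : jumps_in J e ->
  (forall p m, 0 <= p -> p < m -> jumpfree J p m -> P m -> e p <= e m) ->
  forall s t, 0 <= s -> s <= t -> (forall u, s < u -> u <= t -> P u) -> e s <= e t.
Proof.
move=> Je step s t s0 st; have t0 := le_trans s0 st; move: st.
pose Q t := s <= t -> (forall u, s < u -> u <= t -> P u) -> e s <= e t.
apply: (@jumps_ind J Q _ _ _ t t0).
- move=> u v u0 uv noj Qu sv Pv; case: (leP s u) => su.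
    rewrite (Je u v) //; apply: Qu => // w sw wu; apply: Pv => //; exact: le_trans wu uv.
  rewrite (Je s v) // => j jJ /andP[sj jv]; apply: (noj j jJ).
  by rewrite jv (lt_trans su sj).
- by move=> s_le0 _; have -> : s = 0 by apply/le_anti; rewrite s_le0 s0.
- move=> p m p0 pm noj Qp sm Pm; case: (eqVneq s m) => [->//|nsm].
  have sm' : s < m by rewrite lt_neqAle nsm sm.
  case: (leP s p) => sp.
    apply: le_trans (Qp sp _) (step p m p0 pm noj (Pm m sm' (lexx m))).
    by move=> w sw wp; apply: Pm => //; exact: le_trans wp (ltW pm).
  apply: step => //; last exact: Pm.
  by move=> j jJ /andP[sj jm]; apply: (noj j jJ); rewrite jm (lt_trans sp sj).
Qed.

Lemma locally_const_cvg_right (f : R -> R) t q : t < q ->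
  (forall u, t <= u -> u < q -> f u = f t) -> f x @[x --> t^'+] --> f t.
Proof.
move=> tq fE; apply: cvg_near_cst; near=> x; apply: fE.
  by near: x; exact: nbhs_right_ge.
by near: x; exact: nbhs_right_lt.
Unshelve. all: by end_near. Qed.

Lemma locally_const_cvg_left (f : R -> R) p t : p < t ->
  (forall u, p <= u -> u < t -> f u = f p) -> f x @[x --> t^'-] --> f p.
Proof.
move=> pt fE; apply: cvg_near_cst; near=> x; apply: fE.
  by near: x; exact: nbhs_left_ge.
by near: x; exact: nbhs_left_lt.
Unshelve. all: by end_near. Qed.

Lemma locally_const_lim_left (f : R -> R) p t : p < t ->
  (forall u, p <= u -> u < t -> f u = f p) -> lim (f x @[x --> t^'-]) = f p.
Proof. by move=> pt /(locally_const_cvg_left pt) /cvg_lim; apply. Qed.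

Lemma jumps_in_cadlag J (f : R -> R) : jumps_in J f -> cadlag f.
Proof.
move=> Jf; split=> t t0.
  have [q tq noj] := jumpfree_right t J.
  apply: (locally_const_cvg_right tq) => u tu uq.
  by apply: (jumpfree_const Jf t0 noj); rewrite tu uq.
have [p [p0 pt noj]] := jumpfree_left J t0.
apply: (cvgP (f p)); apply: (locally_const_cvg_left pt) => u pu ut.
by apply: (jumpfree_const Jf p0 noj); rewrite pu ut.
Qed.

Lemma jumps_in_leftlim J (f : R -> R) p t : jumps_in J f ->
  0 <= p -> p < t -> jumpfree J p t -> leftlim f t = f p.
Proof.
move=> Jf p0 pt noj; rewrite /leftlim gt_eqF ?(le_lt_trans p0 pt) //.
apply: (locally_const_lim_left pt) => u pu ut.
by apply: (jumpfree_const Jf p0 noj); rewrite pu ut.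
Qed.

End JumpTimes.

Lemma image_const_on (T U : Type) (A : set T) (f : T -> U) c :
  A !=set0 -> (forall x, A x -> f x = c) -> f @` A = [set c].
Proof.
move=> [a Aa] fE; apply/seteqP; split => [_ [x Ax <-]|_ ->] /=; first by rewrite fE.
by exists a => //; rewrite fE.
Qed.

Section ExtendedReals.
Variable R : realType.
Local Open Scope ereal_scope.

Lemma ereal_supU (A B : set (\bar R)) :
  ereal_sup (A `|` B) = maxe (ereal_sup A) (ereal_sup B).
Proof.
apply/le_anti/andP; split.
  apply/ereal_supP => y [Ay|By]; rewrite le_max.
    by rewrite (ereal_sup_ubound Ay).
  by rewrite (ereal_sup_ubound By) orbT.
by rewrite ge_max (ereal_sup_le (@subsetUl _ A B)) (ereal_sup_le (@subsetUr _ A B)).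
Qed.

Lemma ereal_infU (A B : set (\bar R)) :
  ereal_inf (A `|` B) = mine (ereal_inf A) (ereal_inf B).
Proof.
apply/le_anti/andP; split; last first.
  apply/ereal_infP => y [Ay|By]; rewrite ge_min.
    by rewrite (ereal_inf_lbound Ay).
  by rewrite (ereal_inf_lbound By) orbT.
by rewrite le_min (ereal_inf_le_tmp (@subsetUl _ A B)) (ereal_inf_le_tmp (@subsetUr _ A B)).
Qed.

Lemma ereal_sup_minr (T : Type) (A : set T) (F : T -> \bar R) m :
  ereal_sup [set mine (F v) m | v in A] = mine (ereal_sup (F @` A)) m.
Proof.
apply/le_anti/andP; split.
  apply/ereal_supP => _ [v Av <-]; rewrite le_min !ge_min lexx orbT andbT.
  by rewrite ereal_sup_ubound //; exists v.
case: (leP (ereal_sup (F @` A)) m) => supm; last first.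
  have [_ [v Av <-] mv] := ereal_sup_gt supm.
  by apply: ereal_sup_ubound; exists v => //; rewrite min_r // ltW.
apply/ereal_supP => _ [v Av <-]; case: (leP (F v) m) => vm.
  by apply: ereal_sup_ubound; exists v => //; rewrite min_l.
have : F v <= ereal_sup (F @` A) by apply: ereal_sup_ubound; exists v.
by move=> /le_trans /(_ supm); rewrite leNgt vm.
Qed.

Definition clamp (a b x : \bar R) := maxe a (mine x b).

Lemma clampP (a b x : \bar R) : a <= b ->
  [/\ a <= clamp a b x, clamp a b x <= b,
      a < clamp a b x -> clamp a b x <= x &
      clamp a b x < b -> x <= clamp a b x].
Proof.
move=> ab; rewrite /clamp; split.
- by rewrite le_max lexx.
- by rewrite ge_max ab ge_min lexx orbT.
- rewrite lt_max ltxx /= => h; rewrite ge_max ge_min lexx /= andbT.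
  by apply/ltW; apply: lt_le_trans h _; rewrite ge_min lexx.
- case: (leP x b) => xb; first by rewrite le_max lexx orbT.
  by rewrite gt_max ltxx andbF.
Qed.

Lemma clamp_unique (a b x y : \bar R) : a <= y -> y <= b ->
  (a < y -> y <= x) -> (y < b -> x <= y) -> y = clamp a b x.
Proof.
move=> ay yb yx xy; apply/le_anti/andP; rewrite /clamp; split.
  case: (leP y a) => ya; first by rewrite le_max ya.
  by rewrite le_max le_min yx // yb orbT.
rewrite ge_max ay ge_min; case: (ltP y b) => [/xy ->|] //.
by rewrite orbT.
Qed.

Lemma clamp_fin_num (a b x : \bar R) : a != +oo -> b != -oo -> x \is a fin_num ->
  clamp a b x \is a fin_num.
Proof.
move=> ha hb; rewrite !fin_numE => /andP[x1 x2]; apply/andP; split.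
  by rewrite -ltNye lt_max lt_min !ltNye x1 hb orbT.
by rewrite -ltey gt_max ltey ha /= gt_min ltey x2.
Qed.

Lemma EFinB_le (a x : R) (b : \bar R) : (a%:E - b <= x%:E) = ((a - x)%:E <= b).
Proof.
case: b => [b||] /=; rewrite ?leNye ?leey //.
by rewrite -EFinD !lee_fin; apply/idP/idP => H; lra.
Qed.

Lemma EFinB_lt (a x : R) (b : \bar R) : (a%:E - b < x%:E) = ((a - x)%:E < b).
Proof.
case: b => [b||] /=; rewrite ?ltNye ?ltey //.
by rewrite -EFinD !lte_fin; apply/idP/idP => H; lra.
Qed.

Lemma le_EFinB (a x : R) (b : \bar R) : (x%:E <= a%:E - b) = (b <= (a - x)%:E).
Proof.
case: b => [b||] /=; rewrite ?leNye ?leey //.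
by rewrite -EFinD !lee_fin; apply/idP/idP => H; lra.
Qed.

Lemma lt_EFinB (a x : R) (b : \bar R) : (x%:E < a%:E - b) = (b < (a - x)%:E).
Proof.
case: b => [b||] /=; rewrite ?ltNye ?ltey //.
by rewrite -EFinD !lte_fin; apply/idP/idP => H; lra.
Qed.

End ExtendedReals.

Section XiAlgebra.
Variable R : realType.
Variables (l r : R -> \bar R) (psi : R -> R).
Local Open Scope ereal_scope.

Definition psil u := (psi u)%:E - l u.
Definition psir u := (psi u)%:E - r u.
Definition psil_inf (A : set R) := ereal_inf (psil @` A).
Definition Xi_sup (A : set R) t :=
  ereal_sup [set mine (psir s) (psil_inf `[s, t]) | s in A].

Local Notation X := (Xi l r psi).

Lemma XiE t : X t = maxe (mine (maxe (psir 0) 0) (psil_inf `[0%R, t])) (Xi_sup `[0%R, t] t).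
Proof. by []. Qed.

Lemma itv_cc_split (a s t : R) : (a <= s)%R -> (s <= t)%R ->
  `[a, t]%classic = `[a, s] `|` `]s, t].
Proof. by move=> ha hs; apply: itv_bndbnd_setU; rewrite bnd_simp. Qed.

Lemma psil_inf_split a s t : (a <= s)%R -> (s <= t)%R ->
  psil_inf `[a, t] = mine (psil_inf `[a, s]) (psil_inf `]s, t]).
Proof. by move=> ha hs; rewrite /psil_inf (itv_cc_split ha hs) image_setU ereal_infU. Qed.

Lemma psil_inf1 t : psil_inf `[t, t] = psil t.
Proof. by rewrite /psil_inf set_itv1 image_set1 ereal_inf1. Qed.

Lemma psil_inf_const A c : A !=set0 -> (forall u, A u -> psil u = c) -> psil_inf A = c.
Proof. by move=> A0 psilE; rewrite /psil_inf (image_const_on A0 psilE) ereal_inf1. Qed.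

Lemma Xi_split s t : (0 <= s)%R -> (s <= t)%R ->
  X t = maxe (mine (X s) (psil_inf `]s, t])) (Xi_sup `]s, t] t).
Proof.
move=> s0 st; rewrite !XiE (psil_inf_split s0 st).
have -> : Xi_sup `[0%R, t] t = maxe (Xi_sup `[0%R, s] t) (Xi_sup `]s, t] t).
  by rewrite /Xi_sup (itv_cc_split s0 st) image_setU ereal_supU.
have -> : Xi_sup `[0%R, s] t = mine (Xi_sup `[0%R, s] s) (psil_inf `]s, t]).
  rewrite /Xi_sup -ereal_sup_minr; congr ereal_sup; apply: eq_imagel => v.
  by rewrite /= in_itv /= => /andP[_ vs]; rewrite (psil_inf_split vs st) minA.
set c := maxe (psir 0) 0; set I := psil_inf `[0%R, s]; set M := psil_inf `]s, t].
by rewrite (min_maxl (mine c I)) -(minA c) maxA.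
Qed.

Lemma Xi_ge_psir t : (0 <= t)%R -> psir t <= psil t -> psir t <= X t.
Proof.
move=> t0 rl; rewrite XiE le_max; apply/orP; right.
apply: ereal_sup_ubound; exists t; first by rewrite /= in_itv /= t0 lexx.
by rewrite psil_inf1 min_l.
Qed.

Lemma Xi_le_psil t : (0 <= t)%R -> X t <= psil t.
Proof.
have inf_le s : (s <= t)%R -> psil_inf `[s, t] <= psil t.
  by move=> st; apply: ereal_inf_lbound; exists t => //; rewrite /= in_itv /= st lexx.
move=> t0; rewrite XiE ge_max !ge_min inf_le ?orbT //=.
by apply/ereal_supP => _ [v /= /andP[_ vt] <-]; rewrite ge_min inf_le ?orbT.
Qed.

Lemma Xi_const_on s t : (0 <= s)%R -> (s <= t)%R -> psir s <= psil s ->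
  (forall u, (s < u)%R -> (u <= t)%R -> psil u = psil s /\ psir u = psir s) ->
  X t = X s.
Proof.
move=> s0 st rl_s dataE; have [<-//|nst] := eqVneq s t.
have st' : (s < t)%R by rewrite lt_neqAle nst st.
have inf_const A : A !=set0 -> A `<=` `]s, t] -> psil_inf A = psil s.
  move=> A0 At; apply: psil_inf_const => // u /At /=.
  by rewrite in_itv /= => /andP[su ut]; case: (dataE u su ut).
rewrite (Xi_split s0 st) inf_const //; last by exists t; rewrite /= in_itv /= st' lexx.
have -> : Xi_sup `]s, t] t = psir s.
  rewrite /Xi_sup (@image_const_on _ _ _ _ (psir s)) ?ereal_sup1 //.
    by exists t; rewrite /= in_itv /= st' lexx.
  move=> v /=; rewrite in_itv /= => /andP[sv vt]; have [_ ->] := dataE v sv vt.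
  rewrite inf_const ?min_l //; first by exists t; rewrite /= in_itv /= vt lexx.
  move=> u /=; rewrite !in_itv /= => /andP[vu ->].
  by rewrite (lt_le_trans sv vu).
by rewrite min_l ?Xi_le_psil // max_l //; exact: Xi_ge_psir.
Qed.

Lemma Xi_step p m : (0 <= p)%R -> (p < m)%R ->
  psir p <= psil p -> psir m <= psil m ->
  (forall u, (p <= u)%R -> (u < m)%R -> psil u = psil p /\ psir u = psir p) ->
  X m = clamp (psir m) (psil m) (X p).
Proof.
move=> p0 pm rl_p rl_m dataE.
have inf_m A : A !=set0 -> A `<=` `[p, m[ ->
    psil_inf (A `|` [set m]) = mine (psil p) (psil m).
  move=> A0 Apm; rewrite /psil_inf image_setU image_set1 ereal_infU ereal_inf1.
  rewrite -/(psil_inf A) (@psil_inf_const _ (psil p) A0) // => u /Apm /=.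
  by rewrite in_itv /= => /andP[pu um]; case: (dataE u pu um).
have mid : `]p, m[%classic !=set0.
  by exists ((p + m) / 2)%R; rewrite /= in_itv /=; apply/andP; split; lra.
rewrite (Xi_split p0 (ltW pm)) -(@setUitv1 _ _ _ _ true) ?bnd_simp // inf_m //; last first.
  by move=> u; rewrite /= !in_itv /= => /andP[/ltW -> ->].
have -> : Xi_sup (`]p, m[ `|` [set m]) m = maxe (mine (psir p) (mine (psil p) (psil m))) (psir m).
  rewrite /Xi_sup image_setU image_set1 ereal_supU ereal_sup1 psil_inf1 (min_l rl_m).
  rewrite (@image_const_on _ _ _ _ (mine (psir p) (mine (psil p) (psil m)))) ?ereal_sup1 //.
  move=> v /=; rewrite in_itv /= => /andP[pv vm]; have [_ ->] := dataE v (ltW pv) vm.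
  rewrite -(@setUitv1 _ _ _ _ true) ?bnd_simp ?(ltW vm) // inf_m //.
    by exists v; rewrite /= in_itv /= lexx vm.
  by move=> u; rewrite /= !in_itv /= => /andP[vu ->]; rewrite (le_trans (ltW pv) vu).
have rX := Xi_ge_psir p0 rl_p; have Xl := Xi_le_psil p0.
have rm_le_Xm : mine (psir p) (psil m) <= mine (X p) (psil m).
  by rewrite le_min !ge_min rX lexx orbT.
rewrite (minA (X p)) (min_l Xl) (minA (psir p)) (min_l (le_trans rX Xl)).
by rewrite maxA (max_l rm_le_Xm) maxC.
Qed.

Lemma Xi_at0 : psir 0 <= psil 0 -> X 0 = clamp (psir 0) (psil 0) 0.
Proof.
move=> rl0; rewrite XiE /Xi_sup set_itv1 image_set1 ereal_sup1 -set_itv1 psil_inf1.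
rewrite (min_l rl0).
rewrite /clamp; case: (leP (psir 0) 0) => r0; first by rewrite maxC.
by rewrite min_l // max_l // max_l // ge_min (ltW r0).
Qed.

End XiAlgebra.

Section Barrier.
Variable R : realType.

Lemma nonincreasing_above_barrier (f lam : R -> R) (L s t : R) : s <= t ->
  (forall u, s <= u -> u <= t -> L <= f u) ->
  (forall a, s <= a -> a <= t -> (forall u, a < u -> u <= t -> L < f u) -> f t <= f a) ->
  (forall u, s < u -> u <= t -> f x @[x --> u^'-] --> lam u) ->
  (forall u, s < u -> u <= t -> L < f u -> f u <= lam u) ->
  f t <= f s.
Proof.
move=> st L_le_f decr_off flim jump_down.
pose Z := [set u | [/\ s < u, u <= t & f u <= L]].
have [[z0 Zz0]|Z0] := pselect (Z !=set0); last first.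
  apply: decr_off => // u su ut; rewrite ltNge; apply/negP => fuL.
  by apply: Z0; exists u.
have supZ : has_sup Z by split; [exists z0 | exists t => u []].
set sig := sup Z.
have le_sig z : Z z -> z <= sig by exact: sup_upper_bound.
have sig_t : sig <= t by apply: ge_sup; [exists z0 | move=> u []].
have s_sig : s < sig by have [sz0 _ _] := Zz0; apply: lt_le_trans sz0 (le_sig _ Zz0).
have Z_le z : Z z -> f z <= f s by case=> _ _ fzL; apply: le_trans fzL (L_le_f s _ st).
have sig_le_s : f sig <= f s.
  have [fsigL|Lfsig] := leP (f sig) L; first by apply: Z_le.
  apply: le_trans (jump_down sig s_sig sig_t Lfsig) _.
  (* Z accumulates at sig from the left, where f <= f s *)
  rewrite leNgt; apply/negP => fs_lt_lam.
  have [e /= e0 near_lam] := cvgr_gt (lam sig) (flim sig s_sig sig_t) _ fs_lt_lam.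
  have [z Zz] := sup_adherent e0 supZ; rewrite -/sig => ze.
  have z_lt_sig : z < sig.
    rewrite lt_neqAle le_sig // andbT; apply: contraTN Lfsig => /eqP <-.
    by case: Zz => _ _; rewrite -leNgt.
  have := near_lam z; rewrite /ball /= ger0_norm ?subr_ge0 ?(ltW z_lt_sig) //.
  have sz_e : sig - z < e by lra.
  by move=> /(_ sz_e z_lt_sig); have := Z_le z Zz; lra.
apply: le_trans sig_le_s; apply: decr_off (ltW s_sig) sig_t _ => u sigu ut.
rewrite ltNge; apply/negP => fuL.
by move: (le_sig u (And3 (lt_trans s_sig sigu) ut fuL)); rewrite leNgt sigu.
Qed.

End Barrier.

Section ESPSolution.
Variable R : realType.
Variables (l r : R -> \bar R) (psi : R -> R) (J : seq R).
Hypothesis l_neq_oo : forall t, 0 <= t -> l t != +oo%E.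
Hypothesis r_neq_Noo : forall t, 0 <= t -> r t != -oo%E.
Hypothesis l_le_r : forall t, 0 <= t -> (l t <= r t)%E.
Hypotheses (Jl : jumps_in J l) (Jr : jumps_in J r) (Jpsi : jumps_in J psi).

Local Notation X := (Xi l r psi).
Local Notation psil := (psil l psi).
Local Notation psir := (psir r psi).

Lemma psir_le_psil t : 0 <= t -> (psir t <= psil t)%E.
Proof. by move=> t0; rewrite leeB // l_le_r. Qed.

Lemma jumps_in_psil : jumps_in J psil.
Proof. exact: (jumps_in_comp2 (fun a b => (a%:E - b)%E) Jpsi Jl). Qed.

Lemma jumps_in_psir : jumps_in J psir.
Proof. exact: (jumps_in_comp2 (fun a b => (a%:E - b)%E) Jpsi Jr). Qed.

Lemma jumps_in_Xi : jumps_in J X.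
Proof.
move=> u v u0 uv noj; apply: Xi_const_on => //; first exact: psir_le_psil.
move=> w uw wv; have noj_w j : j \in J -> ~ (u < j <= w).
  by move=> jJ /andP[uj jw]; apply: (noj j jJ); rewrite uj (le_trans jw wv).
by rewrite (jumps_in_psil u0 (ltW uw) noj_w) (jumps_in_psir u0 (ltW uw) noj_w).
Qed.

Lemma Xi_jumpfree_step p m : 0 <= p -> p < m -> jumpfree J p m ->
  X m = clamp (psir m) (psil m) (X p).
Proof.
move=> p0 pm noj; have m0 := le_trans p0 (ltW pm).
apply: Xi_step; rewrite ?psir_le_psil // => u pu um; have pum : p <= u < m by rewrite pu.
by rewrite (jumpfree_const jumps_in_psil p0 noj pum) (jumpfree_const jumps_in_psir p0 noj pum).
Qed.

Lemma psir_neq_oo t : 0 <= t -> psir t != +oo%E.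
Proof. by move=> t0; rewrite /psir; move: (r_neq_Noo t0); case: (r t). Qed.

Lemma psil_neq_Noo t : 0 <= t -> psil t != -oo%E.
Proof. by move=> t0; rewrite /psil; move: (l_neq_oo t0); case: (l t). Qed.

Lemma Xi_fin_num t : 0 <= t -> X t \is a fin_num.
Proof.
apply: (@jumps_ind _ J (fun t => X t \is a fin_num)).
- by move=> u v u0 uv noj; rewrite (jumps_in_Xi u0 uv noj).
- by rewrite Xi_at0 ?psir_le_psil // clamp_fin_num ?psir_neq_oo ?psil_neq_Noo.
- move=> p m p0 pm noj Xp; have m0 := le_trans p0 (ltW pm).
  by rewrite (Xi_jumpfree_step p0 pm noj) clamp_fin_num ?psir_neq_oo ?psil_neq_Noo.
Qed.

Definition eta_Xi t := - fine (X t).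
Definition phi_Xi t := psi t - fine (X t).

Lemma jumps_in_fine_Xi : jumps_in J (fine \o X).
Proof. exact: jumps_in_comp jumps_in_Xi. Qed.

Lemma jumps_in_eta_Xi : jumps_in J eta_Xi.
Proof. exact: jumps_in_comp jumps_in_fine_Xi. Qed.

Lemma Xi_leftlim t : 0 <= t -> exists x : R,
  leftlim eta_Xi t = - x /\ X t = clamp (psir t) (psil t) x%:E.
Proof.
move=> t0; have [->|tn0] := eqVneq t 0.
  by exists 0; rewrite /leftlim eqxx oppr0 Xi_at0 ?psir_le_psil.
have t_gt0 : 0 < t by rewrite lt_neqAle eq_sym tn0 t0.
have [p [p0 pt noj]] := jumpfree_left J t_gt0.
exists (fine (X p)); split; first exact: (jumps_in_leftlim jumps_in_eta_Xi p0 pt noj).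
by rewrite (Xi_jumpfree_step p0 pt noj) fineK // Xi_fin_num.
Qed.

Lemma phi_Xi_between t : 0 <= t ->
  (l t <= (phi_Xi t)%:E)%E /\ ((phi_Xi t)%:E <= r t)%E.
Proof.
move=> t0; have lo := Xi_ge_psir t0 (psir_le_psil t0); have hi := Xi_le_psil l r psi t0.
rewrite -(fineK (Xi_fin_num t0)) /psir in lo; rewrite -(fineK (Xi_fin_num t0)) /psil in hi.
by rewrite -le_EFinB -EFinB_le.
Qed.

Lemma eta_Xi_nondecreasing s t : 0 <= s -> s <= t ->
  (forall u, s < u -> u <= t -> ((phi_Xi u)%:E < r u)%E) -> eta_Xi s <= eta_Xi t.
Proof.
apply: (jumps_in_nondecreasing jumps_in_eta_Xi) => p m p0 pm noj phi_lt_r.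
have m0 := le_trans p0 (ltW pm).
have [_ _ above _] := clampP (X p) (psir_le_psil m0).
rewrite -(Xi_jumpfree_step p0 pm noj) -(fineK (Xi_fin_num m0)) -(fineK (Xi_fin_num p0)) in above.
by rewrite /eta_Xi lerN2 -lee_fin above // /psir EFinB_lt.
Qed.

Lemma eta_Xi_nonincreasing s t : 0 <= s -> s <= t ->
  (forall u, s < u -> u <= t -> (l u < (phi_Xi u)%:E)%E) -> eta_Xi t <= eta_Xi s.
Proof.
move=> s0 st; rewrite /eta_Xi lerN2; move: s0 st.
apply: (jumps_in_nondecreasing jumps_in_fine_Xi) => p m p0 pm noj l_lt_phi.
have m0 := le_trans p0 (ltW pm).
have [_ _ _ below] := clampP (X p) (psir_le_psil m0).
rewrite -(Xi_jumpfree_step p0 pm noj) -(fineK (Xi_fin_num m0)) -(fineK (Xi_fin_num p0)) in below.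
by rewrite -lee_fin below // /psil lt_EFinB.
Qed.

Lemma eta_Xi_jump t : 0 <= t ->
  (((phi_Xi t)%:E < r t)%E -> eta_Xi t - leftlim eta_Xi t >= 0) /\
  ((l t < (phi_Xi t)%:E)%E -> eta_Xi t - leftlim eta_Xi t <= 0).
Proof.
move=> t0; have [x [-> Xt]] := Xi_leftlim t0.
have [_ _ above below] := clampP x%:E (psir_le_psil t0).
rewrite -Xt -(fineK (Xi_fin_num t0)) in above below.
rewrite /eta_Xi opprK; split => [phi_lt_r|l_lt_phi].
  by move: above; rewrite /psir EFinB_lt => /(_ phi_lt_r); rewrite lee_fin; lra.
by move: below; rewrite /psil lt_EFinB => /(_ l_lt_phi); rewrite lee_fin; lra.
Qed.

Lemma Xi_ESP : ESP l r psi phi_Xi eta_Xi.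
Proof.
split; first exact: jumps_in_cadlag (jumps_in_comp2 (fun a b => a - b) Jpsi jumps_in_fine_Xi).
split; first exact: jumps_in_cadlag jumps_in_eta_Xi.
split; first by move=> t t0; split; [|exact: phi_Xi_between].
split; last exact: eta_Xi_jump.
move=> s t s0 st; rewrite subr_ge0 subr_le0; split.
  exact: eta_Xi_nondecreasing.
exact: eta_Xi_nonincreasing.
Qed.

Section Uniqueness.
Variables phi eta : R -> R.
Hypothesis esp : ESP l r psi phi eta.

Lemma data_const_on u v : 0 <= u -> u <= v -> (forall j, j \in J -> ~ (u < j <= v)) ->
  forall w, u <= w -> w <= v -> [/\ psi w = psi u, l w = l u & r w = r u].
Proof.
move=> u0 uv noj w uw wv; have noj_w j : j \in J -> ~ (u < j <= w).
  by move=> jJ /andP[uj jw]; apply: (noj j jJ); rewrite uj (le_trans jw wv).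
by rewrite (Jpsi u0 uw noj_w) (Jl u0 uw noj_w) (Jr u0 uw noj_w).
Qed.

Lemma ESP_phi_shift u v w : 0 <= u -> u <= v -> (forall j, j \in J -> ~ (u < j <= v)) ->
  u <= w -> w <= v -> phi w = psi u + eta w.
Proof.
move=> u0 uv noj uw wv; have [_ [_ [/(_ w (le_trans u0 uw)) [-> _] _]]] := esp.
by have [-> _ _] := data_const_on u0 uv noj uw wv.
Qed.

Lemma ESP_leftlim w : 0 < w -> eta x @[x --> w^'-] --> leftlim eta w.
Proof.
move=> w0; rewrite /leftlim gt_eqF //; have [_ [[_ lim_eta] _]] := esp.
exact: lim_eta.
Qed.

Lemma ESP_eta_le u v : 0 <= u -> u <= v -> (forall j, j \in J -> ~ (u < j <= v)) ->
  eta v <= eta u.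
Proof.
move=> u0 uv noj; have D := data_const_on u0 uv noj; have phiE := ESP_phi_shift u0 uv noj.
have [_ [_ [bounds [mono jumps]]]] := esp.
case Lu: (l u) => [L||]; last 2 first.
- by move: (l_neq_oo u0); rewrite Lu.
- rewrite -subr_le0; apply: (mono u v u0 uv).2 => w uw wv.
  by have [_ -> _] := D w (ltW uw) wv; rewrite Lu ltNyr.
rewrite -(lerD2l (psi u)).
apply: (@nonincreasing_above_barrier _ (fun x => psi u + eta x)
  (fun w => psi u + leftlim eta w) L) => //.
- move=> w uw wv; rewrite -lee_fin -phiE // -Lu.
  by have [_ <- _] := D w uw wv; have [_ []] := bounds w (le_trans u0 uw).
- move=> a ua av above; rewrite lerD2l -subr_le0.
  apply: (mono a v (le_trans u0 ua) av).2 => w aw wv; have uw := le_trans ua (ltW aw).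
  by have [_ -> _] := D w uw wv; rewrite Lu phiE // lte_fin above.
- by move=> w uw wv; apply: cvgD; [exact: cvg_cst | exact: ESP_leftlim (le_lt_trans u0 uw)].
- move=> w uw wv above; rewrite lerD2l -subr_le0.
  apply: (jumps w (le_trans u0 (ltW uw))).2.
  by have [_ -> _] := D w (ltW uw) wv; rewrite Lu phiE ?(ltW uw) // lte_fin.
Qed.

Lemma ESP_eta_ge u v : 0 <= u -> u <= v -> (forall j, j \in J -> ~ (u < j <= v)) ->
  eta u <= eta v.
Proof.
move=> u0 uv noj; have D := data_const_on u0 uv noj; have phiE := ESP_phi_shift u0 uv noj.
have [_ [_ [bounds [mono jumps]]]] := esp.
case Ru: (r u) => [U||]; last 2 first.
- rewrite -subr_ge0; apply: (mono u v u0 uv).1 => w uw wv.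
  by have [_ _ ->] := D w (ltW uw) wv; rewrite Ru ltry.
- by move: (r_neq_Noo u0); rewrite Ru.
rewrite -lerN2 -(lerD2l (- psi u)).
apply: (@nonincreasing_above_barrier _ (fun x => - psi u - eta x)
  (fun w => - psi u - leftlim eta w) (- U)) => //.
- move=> w uw wv; rewrite -opprD lerN2 -lee_fin -phiE // -Ru.
  by have [_ _ <-] := D w uw wv; have [_ []] := bounds w (le_trans u0 uw).
- move=> a ua av below; rewrite lerD2l lerN2 -subr_ge0.
  apply: (mono a v (le_trans u0 ua) av).1 => w aw wv; have uw := le_trans ua (ltW aw).
  have [_ _ ->] := D w uw wv; rewrite Ru phiE // lte_fin.
  by have := below w aw wv; lra.
- by move=> w uw wv; apply: cvgB; [exact: cvg_cst | exact: ESP_leftlim (le_lt_trans u0 uw)].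
- move=> w uw wv below; rewrite lerD2l lerN2 -subr_ge0.
  apply: (jumps w (le_trans u0 (ltW uw))).1.
  have [_ _ ->] := D w (ltW uw) wv; rewrite Ru phiE ?(ltW uw) // lte_fin; lra.
Qed.

Lemma ESP_eta_const u v : 0 <= u -> u <= v -> (forall j, j \in J -> ~ (u < j <= v)) ->
  eta v = eta u.
Proof. by move=> u0 uv noj; apply/le_anti; rewrite ESP_eta_le ?ESP_eta_ge. Qed.

Lemma ESP_eta_clamp t x : 0 <= t -> leftlim eta t = - x ->
  X t = clamp (psir t) (psil t) x%:E -> eta t = eta_Xi t.
Proof.
move=> t0 eta_t_ Xt; have [_ [_ [bounds [_ jumps]]]] := esp.
have [phiE [l_le_phi phi_le_r]] := bounds t t0.
have psi_eta : psi t - - eta t = phi t by rewrite opprK phiE.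
rewrite /eta_Xi; suff -> : X t = (- eta t)%:E by rewrite /= opprK.
rewrite Xt; apply/esym/clamp_unique.
- by rewrite /psir EFinB_le psi_eta.
- by rewrite /psil le_EFinB psi_eta.
- rewrite /psir EFinB_lt psi_eta lee_fin => /((jumps t t0).1); rewrite eta_t_; lra.
- rewrite /psil lt_EFinB psi_eta lee_fin => /((jumps t t0).2); rewrite eta_t_; lra.
Qed.

Lemma ESP_eta_eq t : 0 <= t -> eta t = eta_Xi t.
Proof.
apply: (@jumps_ind _ J (fun t => eta t = eta_Xi t)).
- move=> u v u0 uv noj eta_u.
  by rewrite (ESP_eta_const u0 uv noj) eta_u /eta_Xi (jumps_in_Xi u0 uv noj).
- by apply: (@ESP_eta_clamp 0 0) => //; rewrite ?Xi_at0 ?psir_le_psil // /leftlim eqxx oppr0.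
- move=> p m p0 pm noj eta_p; have m0 := le_trans p0 (ltW pm).
  apply: (@ESP_eta_clamp m (- eta p)) => //.
    rewrite opprK /leftlim gt_eqF ?(le_lt_trans p0 pm) //.
    apply: (locally_const_lim_left pm) => u pu um; apply: ESP_eta_const => // j jJ.
    by move=> /andP[pj ju]; apply: (noj j jJ); rewrite pj (le_lt_trans ju um).
  by rewrite (Xi_jumpfree_step p0 pm noj) eta_p /eta_Xi opprK fineK // Xi_fin_num.
Qed.

End Uniqueness.

End ESPSolution.

Unset Implicit Arguments.

Theorem proposition2p9 (R : realType) (l r : R -> \bar R) (psi : R -> R) :
  (forall t : R, 0 <= t -> l t != +oo%E) ->
  (forall t : R, 0 <= t -> r t != -oo%E) ->
  pw_const l -> pw_const r -> pw_const psi ->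
  (forall t : R, 0 <= t -> (l t <= r t)%E) ->
  (forall t : R, 0 <= t -> Xi l r psi t \is a fin_num) /\
  ESP l r psi (fun t => psi t - fine (Xi l r psi t)) (fun t => - fine (Xi l r psi t)) /\
  (forall phi eta : R -> R, ESP l r psi phi eta ->
     forall t : R, 0 <= t ->
       phi t = psi t - fine (Xi l r psi t) /\ eta t = - fine (Xi l r psi t)).
Proof.
move=> l_neq_oo r_neq_Noo /pw_const_jumps_in[Jl jl] /pw_const_jumps_in[Jr jr].
move=> /pw_const_jumps_in[Jpsi jpsi] l_le_r.
pose J := Jl ++ Jr ++ Jpsi.
have jl' : jumps_in J l by apply: jumps_in_subset jl => j jJ; rewrite !mem_cat jJ.
have jr' : jumps_in J r by apply: jumps_in_subset jr => j jJ; rewrite !mem_cat jJ orbT.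
have jpsi' : jumps_in J psi by apply: jumps_in_subset jpsi => j jJ; rewrite !mem_cat jJ !orbT.
split; first exact: (Xi_fin_num l_neq_oo r_neq_Noo l_le_r jl' jr' jpsi').
split; first exact: (Xi_ESP l_neq_oo r_neq_Noo l_le_r jl' jr' jpsi').
move=> phi eta esp t t0; have eta_t := ESP_eta_eq l_neq_oo r_neq_Noo l_le_r jl' jr' jpsi' esp t0.
split; last exact: eta_t.
by have [_ [_ [/(_ t t0) [-> _] _]]] := esp; rewrite eta_t.
Qed.
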